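(* Let $d\ge2$, $n\ge1$, let $\gamma$ be a positive conductivity on the lattice graph below, and let $t$ be an integer with $d-1\le t\le dn-1$. Then $T^{(t)}=T_2^{(t)}\circ T_1^{(t)}$, where $T^{(t)},T_1^{(t)},T_2^{(t)}$ are the operators defined in the context.
   Context: Lattice: $D=\{x\in\mathbb Z^d:1\le x_i\le n\ \forall i\}$, $\partial D=\{p\in\mathbb Z^d:\min_{q\in D}\|q-p\|_{\ell^1}=1\}$; $E$ = unordered pairs $pq\subseteq D\cup\partial D$ with $\|p-q\|_{\ell^1}=1$, not both in $\partial D$; $\mathcal N(p)=\{q:pq\in E\}$; each $b\in\partial D$ has a unique neighbour $q_b\in D$. Conductivity $\gamma:E\to(0,\infty)$, symmetric. $(\Delta_\gamma\mathbf u)_p=\sum_{q\in\mathcal N(p)}\gamma_{pq}(\mathbf u_q-\mathbf u_p)$. $S_\gamma\varphi$ is the unique $\mathbf u\in\mathbb R^{D\cup\partial D}$ with $\Delta_\gamma \mathbf u=0$ on $D$, $\mathbf u=\varphi$ on $\partial D$; $(D_\gamma\mathbf u)_b=\gamma_{bq_b}(\mathbf u_{q_b}-\mathbf u_b)$ for $b\in\partial D$; $\Lambda_\gamma=D_\gamma\circ S_\gamma$. Functions on a subset are extended by zero. For $x\in\mathbb Z^d$ let $s(x)=\sum_i x_i$. Define $L_t=\{x\in D:s(x)=t\}$, $L_t^{\mathcal S}=\{x\in D:s(x)\le t\}$, $K_t=\{x\in\partial D:s(x)=t\}$, $K_t^+=\{x\in K_t:\max_i x_i=n+1\}$, $K_t^-=\{x\in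 K_t:\min_i x_i=0\}$, $K_t^{\mathcal S\pm}=\bigcup_{\ell\le t}K_\ell^\pm$, $J_t^{\mathcal S}=K_t^{\mathcal S-}\cup K_{t+1}^{\mathcal S+}$. Operators: $T^{(t)}:\mathbb R^{J_t^{\mathcal S}}\to\mathbb R^{\partial D\setminus J_t^{\mathcal S}}$, $\varphi\mapsto(\Lambda_\gamma\varphi)|_{\partial D\setminus J_t^{\mathcal S}}$; $T_1^{(t)}:\mathbb R^{J_t^{\mathcal S}}\to\mathbb R^{L_{t+1}}$, $\varphi\mapsto(S_\gamma\varphi)|_{L_{t+1}}$. $T_2^{(t)}:\mathbb R^{L_{t+1}}\to\mathbb R^{\partial D\setminus J_t^{\mathcal S}}$ is the Dirichlet-to-Neumann map of the upper part: for $\mathbf y\in\mathbb R^{L_{t+1}}$ let $\mathbf w$ be the unique function on $(D\setminus L_t^{\mathcal S})\cup(\partial D\setminus J_t^{\mathcal S})$ with $\mathbf w=\mathbf y$ on $L_{t+1}$, $\mathbf w=0$ on $\partial D\setminus J_t^{\mathcal S}$ and $(\Delta_\gamma\mathbf w)_p=0$ for all $p\in D\setminus L_{t+1}^{\mathcal S}$; then $(T_2^{(t)}\mathbf y)_b=\gamma_{bq_b}(\mathbf w_{q_b}-\mathbf w_b)$ for $b\in\partial D\setminus J_t^{\mathcal S}$. *)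

From HB Require Import structures.
From mathcomp Require Import all_boot all_order all_algebra.
From Stdlib Require ClassicalEpsilon.
Set Implicit Arguments. Unset Strict Implicit. Unset Printing Implicit Defensive.
Import Order.TTheory GRing.Theory Num.Theory.
Local Open Scope ring_scope.

Definition pt (d : nat) := {ffun 'I_d -> int}.

Section Lattice.
Variables (R : realFieldType) (d n : nat).
Implicit Types (p q b x : pt d) (u : pt d -> R).

Definition l1 p q : nat := (\sum_(i < d) `|p i - q i|)%N.

Definition ssum x : int := \sum_(i < d) x i.

Definition shift p (i : 'I_d) (s : bool) : pt d :=
  [ffun j => if j == i then p j + (if s then 1 else -1) else p j].

Definition inD p : bool := [forall i, (1 <= p i) && (p i <= n%:Z)].

(* boundary: min_{q in D} |q-p|_1 = 1, i.e. p notin D and some point of D at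
   l^1-distance 1 (the points at l^1-distance 1 from p are exactly p +/- e_i) *)
Definition inBD p : bool :=
  ~~ inD p && [exists i : 'I_d, exists s : bool, inD (shift p i s)].

Definition inDbar p : bool := inD p || inBD p.

Definition edge p q : bool :=
  [&& inDbar p, inDbar q, ~~ (inBD p && inBD q) & l1 p q == 1%N].

Definition nbrs p : seq (pt d) :=
  [seq q <- [seq shift p i s | i <- enum 'I_d, s <- [:: true; false]] | edge p q].

(* the unique neighbour q_b in D of a boundary point b *)
Definition qb b : pt d := head b [seq q <- nbrs b | inD q].

Variable gamma : pt d -> pt d -> R.

Definition lap u p : R := \sum_(q <- nbrs p) gamma p q * (u q - u p).

Definition Dgam u b : R := gamma b (qb b) * (u (qb b) - u b).

Definition restr (A : pred (pt d)) u : pt d -> R :=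
  fun p => if A p then u p else 0.

Definition S_spec (phi : pt d -> R) u : Prop :=
  [/\ forall p, inD p -> lap u p = 0,
      forall b, inBD b -> u b = phi b
    & forall p, ~~ inDbar p -> u p = 0].

Definition Sgam (phi : pt d -> R) : pt d -> R :=
  ClassicalEpsilon.epsilon (inhabits (fun _ => 0)) (S_spec phi).

Definition Lam (phi : pt d -> R) : pt d -> R :=
  restr inBD (Dgam (Sgam (restr inBD phi))).

Definition min_is x (v : int) : bool :=
  [exists i, x i == v] && [forall i, v <= x i].
Definition max_is x (v : int) : bool :=
  [exists i, x i == v] && [forall i, x i <= v].

Variable t : int.

Definition inL1 p : bool := inD p && (ssum p == t + 1).
Definition inJ b : bool :=
  inBD b && ((min_is b 0 && (ssum b <= t))
             || (max_is b (n%:Z + 1) && (ssum b <= t + 1))).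
Definition inBDJc b : bool := inBD b && ~~ inJ b.

Definition Top (phi : pt d -> R) : pt d -> R :=
  restr inBDJc (Lam (restr inJ phi)).

Definition T1 (phi : pt d -> R) : pt d -> R :=
  restr inL1 (Sgam (restr inJ phi)).

Definition inUp p : bool := (inD p && (t < ssum p)) || inBDJc p.

Definition T2_spec (y : pt d -> R) (w : pt d -> R) : Prop :=
  [/\ forall p, inL1 p -> w p = y p,
      forall b, inBDJc b -> w b = 0,
      forall p, inD p -> t + 1 < ssum p -> lap w p = 0
    & forall p, ~~ inUp p -> w p = 0].

Definition T2 (y : pt d -> R) : pt d -> R :=
  restr inBDJc
    (Dgam (ClassicalEpsilon.epsilon (inhabits (fun _ => 0))
             (T2_spec (restr inL1 y)))).

End Lattice.

From HB Require Import structures.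
From mathcomp Require Import all_boot all_order all_algebra.
From mathcomp Require Import zify ring.
From Stdlib Require Import ClassicalEpsilon FunctionalExtensionality.
Set Implicit Arguments. Unset Strict Implicit. Unset Printing Implicit Defensive.
Import Order.TTheory GRing.Theory Num.Theory.
Local Open Scope ring_scope.

(* Let u = S_gamma phi with phi supported on J_t.  Every lattice neighbour of a
   point of D with s > t + 1 lies either in D with s >= t + 1 or in dD \ J_t,
   where u vanishes; hence u, restricted to the domain of the upper problem,
   solves that problem with data u = T_1 phi on L_{t+1}.  The upper problem has
   at most one solution by the maximum principle (at a maximiser with largest
   coordinate sum, harmonicity propagates the maximum to the next point up in
   a coordinate direction), so this restriction is the solution defining T_2.
   Since the inner neighbour q_b of every b in dD \ J_t has s(q_b) >= t + 1,
   the normal derivatives at b coincide.  Existence of discrete Dirichlet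
   solutions follows from uniqueness by linear algebra. *)

Lemma seq_argmax (T : eqType) disp (F : orderType disp) (s : seq T) (f : T -> F) :
  s != [::] -> exists2 x, x \in s & forall y, y \in s -> (f y <= f x)%O.
Proof.
elim: s => // a s IH _; have [->|/IH[x xs Hx]] := eqVneq s [::].
  by exists a => [|y]; rewrite ?mem_seq1 // => /eqP ->.
have [fax|fxa] := leP (f a) (f x).
  by exists x => [|y]; rewrite inE ?xs ?orbT // => /orP[/eqP ->|/Hx].
exists a => [|y]; first exact: mem_head.
by rewrite inE => /orP[/eqP ->//|/Hx/le_trans]; apply; apply: ltW.
Qed.

Lemma mulmx_surj_of_inj (F : fieldType) k (A : 'M[F]_k) :
  (forall x : 'rV_k, x *m A = 0 -> x = 0) -> forall b : 'rV_k, exists x, x *m A = b.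
Proof.
move=> injA b; have unitA : A \in unitmx.
  rewrite -row_free_unit -kermx_eq0; apply/eqP/row_matrixP => i.
  by rewrite row0; apply: injA; rewrite -row_mul mulmx_ker row0.
by exists (b *m invmx A); rewrite mulmxKV.
Qed.

Section Lattice.
Variables d n : nat.
Implicit Types (p q : pt d) (i : 'I_d) (s : bool).

Lemma shiftE p i s j :
  shift p i s j = if j == i then p j + (if s then 1 else -1) else p j.
Proof. by rewrite ffunE. Qed.

Lemma shiftK p i s : shift (shift p i s) i (~~ s) = p.
Proof. by apply/ffunP => j; rewrite !shiftE; case: eqP => // ->; case: s => /=; ring. Qed.

Lemma ssum_shift p i s : ssum (shift p i s) = ssum p + (if s then 1 else -1).
Proof.
rewrite /ssum (bigD1 i) //= [in RHS](bigD1 i) //= shiftE eqxx.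
rewrite (eq_bigr p) => [|j /negbTE ji]; last by rewrite shiftE ji.
ring.
Qed.

Lemma l1_shift p i s : l1 p (shift p i s) = 1%N.
Proof.
rewrite /l1 (bigD1 i) //= shiftE eqxx big1 => [|j /negbTE ji]; last first.
  by rewrite shiftE ji subrr.
by case: s => /=; rewrite ?opprD addrA subrr.
Qed.

Lemma inDP p : reflect (forall i, 1 <= p i <= n%:Z) (inD n p).
Proof. exact: forallP. Qed.

Lemma shift_inBD p i s : inD n p -> ~~ inD n (shift p i s) -> inBD n (shift p i s).
Proof.
move=> Dp nD; rewrite /inBD nD; apply/existsP; exists i; apply/existsP.
by exists (~~ s); rewrite shiftK.
Qed.

Lemma edge_shift p i s : inD n p -> edge n p (shift p i s).
Proof.
move=> Dp; have nBp : ~~ inBD n p by rewrite /inBD Dp.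
rewrite /edge /inDbar Dp (negbTE nBp) l1_shift andbT /=.
by have [|/(shift_inBD Dp) ->] := boolP (inD n _); rewrite ?orbT.
Qed.

Lemma nbrsP p q : q \in nbrs n p -> edge n p q /\ exists i s, q = shift p i s.
Proof.
rewrite mem_filter => /andP[e /allpairsPdep[i [s [_ _ qE]]]].
by split => //; exists i, s.
Qed.

Lemma mem_nbrs_shift p i s : edge n p (shift p i s) -> shift p i s \in nbrs n p.
Proof.
move=> e; rewrite mem_filter e; apply/flattenP.
exists [:: shift p i true; shift p i false]; first by apply: map_f; rewrite mem_enum.
by case: s {e}; rewrite !inE eqxx ?orbT.
Qed.

Lemma shift_in_nbrs p i s : inD n p -> shift p i s \in nbrs n p.
Proof. by move=> Dp; apply/mem_nbrs_shift/edge_shift. Qed.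

Lemma qbP b : inBD n b -> inD n (qb n b) /\ exists i s, b = shift (qb n b) i s.
Proof.
move=> Bb; have /andP[_ /existsP[i /existsP[s Ds]]] := Bb.
have inner : shift b i s \in [seq q <- nbrs n b | inD n q].
  rewrite mem_filter Ds mem_nbrs_shift //.
  by rewrite /edge /inDbar Bb orbT Ds /inBD Ds andbF l1_shift.
rewrite /qb; case E: [seq q <- _ | _] inner => [//|q r] /= _.
have : q \in [seq q <- nbrs n b | inD n q] by rewrite E mem_head.
rewrite mem_filter => /andP[Dq /nbrsP[_ [j [s' qE]]]].
by split => //; exists j, (~~ s'); rewrite qE shiftK.
Qed.

Lemma shift_notD_coord q i s : inD n q -> ~~ inD n (shift q i s) ->
  q i = if s then n%:Z else 1.
Proof.
move=> /inDP Dq /inDP nD; have /andP[q1 qn] := Dq i.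
have [j] : exists j, ~~ (1 <= shift q i s j <= n%:Z).
  by apply/existsP; rewrite -negb_forall; apply/forallP.
rewrite shiftE; case: eqP => [->|_]; last by rewrite Dq.
by case: s {nD} => /=; lia.
Qed.

Lemma max_is_shift q i : inD n q -> q i = n%:Z -> max_is (shift q i true) (n%:Z + 1).
Proof.
move=> /inDP Dq qi; apply/andP; split.
  by apply/existsP; exists i; rewrite shiftE eqxx qi.
by apply/forallP => j; rewrite shiftE; have /andP[] := Dq j; case: (j == i) => /=; lia.
Qed.

Lemma min_is_shift q i : inD n q -> q i = 1 -> min_is (shift q i false) 0.
Proof.
move=> /inDP Dq qi; apply/andP; split.
  by apply/existsP; exists i; rewrite shiftE eqxx qi.
by apply/forallP => j; rewrite shiftE; have /andP[] := Dq j; case: (j == i) => /=; lia.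
Qed.

Definition D_enum : seq (pt d) :=
  [seq p <- [seq [ffun i => (f i : nat)%:Z] | f : {ffun 'I_d -> 'I_n.+1}] | inD n p].

Lemma D_enum_uniq : uniq D_enum.
Proof.
rewrite filter_uniq // map_inj_uniq ?enum_uniq // => f g /ffunP fg.
by apply/ffunP => i; apply: val_inj; move: (fg i); rewrite !ffunE => -[].
Qed.

Lemma mem_D_enum p : (p \in D_enum) = inD n p.
Proof.
rewrite mem_filter; have [/inDP Dp /=|//] := boolP (inD n p).
apply/mapP; exists [ffun i => inord `|p i|%N]; first by rewrite mem_enum.
apply/ffunP => i; have /andP[p1 pn] := Dp i.
have p0 : 0 <= p i by apply: le_trans p1.
by rewrite !ffunE inordK ?ltnS -?lez_nat gez0_abs.
Qed.

Lemma mem_D_enum_filter (P : pred (pt d)) p : {subset P <= inD n} ->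
  (p \in [seq x <- D_enum | P x]) = P p.
Proof.
by move=> PD; rewrite mem_filter; have [/PD|] := boolP (P p); rewrite ?mem_D_enum.
Qed.

End Lattice.

Section Dirichlet.
Variables (R : realFieldType) (d n : nat) (gamma : pt d -> pt d -> R).
Implicit Types (p q : pt d) (u v : pt d -> R) (P : pred (pt d)).

Local Notation lap := (lap n gamma).

Lemma lapD u v p : lap (fun x => u x + v x) p = lap u p + lap v p.
Proof. by rewrite /lap -big_split; apply: eq_bigr => q _ /=; ring. Qed.

Lemma lapB u v p : lap (fun x => u x - v x) p = lap u p - lap v p.
Proof. by rewrite /lap -sumrB; apply: eq_bigr => q _ /=; ring. Qed.

Lemma lapN u p : lap (fun x => - u x) p = - lap u p.
Proof. by rewrite /lap -sumrN; apply: eq_bigr => q _ /=; ring. Qed.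

Lemma lap_sum k (c : 'I_k -> R) (h : 'I_k -> pt d -> R) p :
  lap (fun x => \sum_j c j * h j x) p = \sum_j c j * lap (h j) p.
Proof.
rewrite /lap; under eq_bigr => q _ do rewrite -sumrB mulr_sumr.
under [RHS]eq_bigr => j _ do rewrite mulr_sumr.
by rewrite exchange_big; apply: eq_bigr => q _; apply: eq_bigr => j _; ring.
Qed.

Lemma eq_lap u v p : u p = v p -> {in nbrs n p, u =1 v} -> lap u p = lap v p.
Proof.
move=> up uv; rewrite /lap big_seq_cond [RHS]big_seq_cond.
by apply: eq_bigr => q /andP[/uv -> _]; rewrite up.
Qed.

Definition harmonic_on P u := forall p, P p -> lap u p = 0.

Hypothesis gamma_pos : forall p q, edge n p q -> 0 < gamma p q.

Lemma lap0_local_max u p q : lap u p = 0 -> {in nbrs n p, forall q, u q <= u p} ->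
  q \in nbrs n p -> u q = u p.
Proof.
move=> /eqP lap0 le_up qp; have [e _] := nbrsP qp.
have terms_ge0 r : r \in nbrs n p -> 0 <= - (gamma p r * (u r - u p)).
  move=> rp; have [er _] := nbrsP rp.
  by rewrite oppr_ge0 pmulr_rle0 ?gamma_pos // subr_le0 le_up.
move: lap0; rewrite -oppr_eq0 -sumrN big_seq psumr_eq0 // => /allP /(_ q qp).
by rewrite qp oppr_eq0 mulf_eq0 (gt_eqF (gamma_pos e)) subr_eq0 => /eqP.
Qed.

Hypothesis d_gt0 : (0 < d)%N.

Lemma max_principle P v : {subset P <= inD n} -> harmonic_on P v ->
  (forall p, ~~ P p -> v p = 0) -> forall p, P p -> v p <= 0.
Proof.
move=> PD harm_v v_out p0 Pp0.
set s := [seq x <- D_enum d n | P x].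
have mem_s x : (x \in s) = P x by apply: mem_D_enum_filter.
have [x1 x1s max_x1] : exists2 x1, x1 \in s & forall y, y \in s -> v y <= v x1.
  by apply: seq_argmax; apply: contraTneq Pp0 => s0; rewrite -mem_s s0.
have [M_le0|M_gt0] := lerP (v x1) 0.
  by apply: le_trans M_le0; apply: max_x1; rewrite mem_s.
set s' := [seq y <- s | v y == v x1].
have [x2] : exists2 x2, x2 \in s' & forall y, y \in s' -> ssum y <= ssum x2.
  have x1s' : x1 \in s' by rewrite mem_filter eqxx x1s.
  by apply: seq_argmax; apply: contraTneq x1s' => ->.
rewrite mem_filter mem_s => /andP[/eqP vx2 Px2] max_x2.
have le_x2 : {in nbrs n x2, forall q, v q <= v x2}.
  move=> q _; rewrite vx2; have [Pq|/v_out ->] := boolP (P q); last exact: ltW.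
  by apply: max_x1; rewrite mem_s.
pose q := shift x2 (Ordinal d_gt0) true.
have qx2 : q \in nbrs n x2 by apply/shift_in_nbrs/PD.
have vq : v q = v x1 by rewrite (lap0_local_max (harm_v _ Px2) le_x2 qx2).
have Pq : P q by apply: contraTT M_gt0 => /v_out; rewrite -vq => ->; rewrite ltxx.
have := max_x2 q; rewrite mem_filter vq eqxx mem_s Pq ssum_shift => /(_ isT).
lia.
Qed.

Lemma harmonic_eq0 P v : {subset P <= inD n} -> harmonic_on P v ->
  (forall p, ~~ P p -> v p = 0) -> forall p, v p = 0.
Proof.
move=> PD harm_v v_out p; have [Pp|/v_out //] := boolP (P p).
apply/eqP; rewrite eq_le (max_principle PD harm_v v_out Pp) -oppr_le0.
apply: (max_principle (v := fun x => - v x) PD) => // [x Px|x /v_out ->].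
  by rewrite lapN harm_v ?oppr0.
by rewrite oppr0.
Qed.

Lemma dirichlet_solvable P g : {subset P <= inD n} ->
  exists u, harmonic_on P u /\ forall p, ~~ P p -> u p = g p.
Proof.
move=> PD; set s := [seq x <- D_enum d n | P x]; pose k := size s.
pose x0 : pt d := [ffun=> 0]; pose e (j : 'I_k) p : R := (p == nth x0 s j)%:R.
pose vec (x : 'rV[R]_k) p := \sum_j x 0 j * e j p.
pose A : 'M[R]_k := \matrix_(i, j) lap (e i) (nth x0 s j).
have vecA x j : (x *m A) 0 j = lap (vec x) (nth x0 s j).
  by rewrite mxE lap_sum; apply: eq_bigr => i _; rewrite mxE.
have P_nth p : P p -> exists j : 'I_k, p = nth x0 s j.
  by rewrite -(mem_D_enum_filter _ PD) => /(nthP x0)[j jk <-]; exists (Ordinal jk).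
have vec_out x p : ~~ P p -> vec x p = 0.
  move=> nPp; apply: big1 => j _; rewrite /e; case: eqP => [pj|]; last by rewrite mulr0.
  by move: nPp; rewrite pj -(mem_D_enum_filter _ PD) mem_nth.
have vec_nth x (i : 'I_k) : vec x (nth x0 s i) = x 0 i.
  rewrite /vec (bigD1 i) //= /e eqxx mulr1 big1 ?addr0 // => j ji.
  have s_uniq : uniq s by exact: filter_uniq (D_enum_uniq d n).
  by rewrite nth_uniq // val_eqE eq_sym (negbTE ji) mulr0.
have injA (y : 'rV[R]_k) : y *m A = 0 -> y = 0.
  move=> yA; apply/rowP => i; rewrite mxE -vec_nth.
  apply: (harmonic_eq0 PD (v := vec y)) => [p /P_nth[j ->]|]; last exact: vec_out.
  by rewrite -vecA yA mxE.
have [x xA] := mulmx_surj_of_inj injA (- \row_j lap g (nth x0 s j)).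
exists (fun p => g p + vec x p); split => [p /P_nth[j ->]|p /(vec_out x) ->].
  by rewrite lapD -vecA xA !mxE addrN.
by rewrite addr0.
Qed.

End Dirichlet.

Section UpperDomain.
Variables (d n : nat) (t : int).
Implicit Types (p q b : pt d) (i : 'I_d) (s : bool).

Definition inUint p : bool := inD n p && (t + 1 < ssum p).

Lemma inUpE p : inUp n t p = [|| inL1 n t p, inUint p | inBDJc n t p].
Proof.
rewrite /inUp /inL1 /inUint orbA; case: (inD n p) => //=; congr (_ || _); lia.
Qed.

Lemma shift_notJ p i s : inD n p -> t + 2 <= ssum p -> ~~ inJ n t (shift p i s).
Proof.
move=> /inDP Dp hp; rewrite /inJ negb_and negb_or ssum_shift; apply/orP; right.
case: s => /=; apply/andP; split; rewrite negb_and; apply/orP; try (right; lia).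
left; rewrite /max_is negb_and negb_exists; apply/orP; left; apply/forallP => j.
by rewrite shiftE; have /andP[] := Dp j; case: (j == i) => *; apply/eqP; lia.
Qed.

Lemma nbr_inUp p q : inUint p -> q \in nbrs n p -> inUp n t q.
Proof.
case/andP=> Dp hp /nbrsP[_ [i [s ->]]]; apply/orP.
have [Dq|nDq] := boolP (inD n (shift p i s)).
  by left; rewrite /= ssum_shift; case: s {Dq}; lia.
by right; rewrite /inBDJc shift_inBD // shift_notJ //; lia.
Qed.

Lemma qb_inUp b : inBDJc n t b -> inUp n t (qb n b).
Proof.
case/andP=> Bb; have [Dq [i [s bE]]] := qbP Bb; set q := qb n b in Dq bE *.
have qi : q i = if s then n%:Z else 1.
  by apply: shift_notD_coord => //; rewrite -bE; case/andP: Bb.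
rewrite /inUp Dq /= /inJ Bb /= negb_or bE ssum_shift.
case: s {bE} qi => /= qi /andP[notJmin notJmax].
  by move: notJmax; rewrite (max_is_shift Dq qi) /=; lia.
by move: notJmin; rewrite (min_is_shift Dq qi) /=; lia.
Qed.

End UpperDomain.

Section UpperProblem.
Variables (R : realFieldType) (d n : nat) (gamma : pt d -> pt d -> R) (t : int).
Implicit Types (p q b : pt d) (phi y w : pt d -> R).

Lemma restr_inBD_inJ phi : restr (inBD n) (restr (inJ n t) phi) = restr (inJ n t) phi.
Proof.
apply: functional_extensionality => p; rewrite /restr.
by have [/andP[-> _]|_] := boolP (inJ n t p); case: (inBD n p).
Qed.

Hypothesis d_gt0 : (0 < d)%N.
Hypothesis gamma_pos : forall p q, edge n p q -> 0 < gamma p q.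

Lemma Sgam_spec phi : S_spec n gamma phi (Sgam n gamma phi).
Proof.
apply: epsilon_spec.
have [u [harm_u u_out]] := dirichlet_solvable gamma_pos d_gt0
  (P := inD n) (restr (inBD n) phi) (fun p Dp => Dp).
exists u; split => // [b Bb|p].
  by rewrite u_out /restr ?Bb //; case/andP: Bb.
by rewrite /inDbar negb_or => /andP[nDp /negbTE nBp]; rewrite u_out /restr ?nBp.
Qed.

Lemma T2_spec_unique y w1 w2 :
  T2_spec n gamma t y w1 -> T2_spec n gamma t y w2 -> w1 = w2.
Proof.
case=> [L1 B1 H1 O1] [L2 B2 H2 O2]; apply: functional_extensionality => p.
apply/eqP; rewrite -subr_eq0; apply/eqP; move: p.
apply: (harmonic_eq0 gamma_pos d_gt0 (P := inUint n t)).
- by move=> x /andP[].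
- by move=> x /andP[Dx hx]; rewrite lapB H1 ?H2 ?subrr.
move=> x nUx.
have [|/[dup] /O1 -> /O2 ->] := boolP (inUp n t x); last exact: subrr.
rewrite inUpE (negbTE nUx) /=.
by case/orP => [/[dup] /L1 -> /L2 ->|/[dup] /B1 -> /B2 ->]; rewrite subrr.
Qed.

Lemma T2E y w : T2_spec n gamma t (restr (inL1 n t) y) w ->
  T2 n gamma t y = restr (inBDJc n t) (Dgam n gamma w).
Proof.
move=> w_spec; have eps_spec := epsilon_spec (inhabits (fun=> 0)) _ (ex_intro _ w w_spec).
by rewrite /T2 (T2_spec_unique eps_spec w_spec).
Qed.

Lemma upper_part_T2_spec phi :
  T2_spec n gamma t (restr (inL1 n t) (T1 n gamma t phi))
    (restr (inUp n t) (Sgam n gamma (restr (inJ n t) phi))).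
Proof.
have [harm_u u_bd _] := Sgam_spec (restr (inJ n t) phi).
split => [p Lp|b Bb|p Dp hp|p /negbTE nUp]; rewrite /restr.
- by rewrite /T1 /restr Lp inUpE Lp.
- by rewrite inUpE Bb !orbT u_bd /restr; case/andP: Bb => // _ /negbTE ->.
- have Up : inUp n t p by rewrite inUpE /inUint Dp hp orbT.
  rewrite -[RHS](harm_u _ Dp); apply: eq_lap => [|q qp] /=; first by rewrite Up.
  by rewrite (nbr_inUp _ qp) // /inUint Dp.
- by rewrite nUp.
Qed.

End UpperProblem.

Theorem proposition2p1 (R : realFieldType) (d n : nat)
  (gamma : pt d -> pt d -> R) (t : int) :
  (2 <= d)%N -> (1 <= n)%N ->
  (forall p q : pt d, edge n p q -> 0 < gamma p q) ->
  (forall p q : pt d, edge n p q -> gamma p q = gamma q p) ->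
  (d%:Z - 1 <= t) -> (t <= (d * n)%:Z - 1) ->
  Top n gamma t = (fun phi => T2 n gamma t (T1 n gamma t phi)).
Proof.
move=> d_ge2 _ gamma_pos _ _ _; have d_gt0 : (0 < d)%N := ltnW d_ge2.
apply: functional_extensionality => phi; apply: functional_extensionality => b.
rewrite (T2E d_gt0 gamma_pos (upper_part_T2_spec t d_gt0 gamma_pos phi)).
rewrite /Top /Lam restr_inBD_inJ /restr.
have [/[dup] Jb /andP[Bb _]|//] := boolP (inBDJc n t b).
have Upb : inUp n t b by rewrite inUpE Jb !orbT.
by rewrite Bb /Dgam qb_inUp // Upb.
Qed.
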